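(* Let $\mathcal{A}\in\mathbb{R}^{m\times m\times n}$ be $(1,2)$-symmetric and nonnegative with $$\mathcal{A}=\begin{pmatrix}\mathcal{A}_1&0\\0&\mathcal{A}_2\end{pmatrix},\qquad \mathcal{A}_i\in\mathbb{R}^{m_i\times m_i\times n},\ i=1,2,\quad m_1+m_2=m,$$ where $\mathcal{A}_1$ and $\mathcal{A}_2$ are irreducible. For a $(1,2)$-symmetric tensor $\mathcal{B}\in\mathbb{R}^{k\times k\times n}$ let $$\varphi(\mathcal{B})=\min\{\|\mathcal{B}-(X,X,Z)\cdot\mathcal{H}\|^2:\ X\in\mathbb{R}^{k\times 2},X^TX=I_2,\ Z\in\mathbb{R}^{n\times 2},Z^TZ=I_2,\ \mathcal{H}\in\mathbb{R}^{2\times2\times2}\}.$$ Assume $\varphi(\mathcal{A})<\varphi(\mathcal{A}_1)+\|\mathcal{A}_2\|^2$ and $\varphi(\mathcal{A})<\varphi(\mathcal{A}_2)+\|\mathcal{A}_1\|^2$, and that the solution $(U,U,W)$ of the $(1,2)$-symmetric best rank-$(2,2,2)$ approximation problem for $\mathcal{A}$, with core $\mathcal{F}=\mathcal{A}\cdot(U,U,W)$, is unique. Then a representative of the solution satisfies $$U=\begin{pmatrix}u_1&0\\0&u_2\end{pmatrix},\qquad u_1\in\mathbb{R}^{m_1},\ u_2\in\mathbb{R}^{m_2},$$ and all 3-slices $\mathcal{F}(:,:,k)$ of the corresponding core tensor are diagonal $2\times2$ matrices. The corresponding result holds for the best rank-$(2,2,1)$ approximation (with $W$ replaced by a single unit vector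 $w$ and $Z\in\mathbb{R}^{n\times1}$, $\mathcal{H}\in\mathbb{R}^{2\times2\times1}$ in the definition of $\varphi$).
   Context: A tensor $\mathcal{A}\in\mathbb{R}^{m\times m\times n}$ is $(1,2)$-symmetric if $\mathcal{A}(i,j,k)=\mathcal{A}(j,i,k)$ for all $i,j,k$. It is (1,2)-reducible if there exist a nonempty proper subset $I\subset\{1,\dots,m\}$ and a nonempty $K\subseteq\{1,\dots,n\}$ with $a_{ijk}=a_{jik}=0$ for all $i\in I,j\notin I,k\in K$; 3-reducible if $a_{ijk}=0$ for all $i,j\in I$, $k\in K$; reducible if either holds; irreducible otherwise. Multilinear multiplication: $(X,Y,Z)\cdot\mathcal{H}$ has entries $\sum_{\alpha,\beta,\gamma}x_{i\alpha}y_{j\beta}z_{k\gamma}h_{\alpha\beta\gamma}$, and $\mathcal{A}\cdot(X,Y,Z):=(X^T,Y^T,Z^T)\cdot\mathcal{A}$. Norm is Frobenius. The $(1,2)$-symmetric best rank-$(r_1,r_1,r_3)$ approximation problem is $\max\|\mathcal{A}\cdot(X,X,Z)\|$ over $X^TX=I_{r_1}$, $Z^TZ=I_{r_3}$ (equivalently minimizing $\|\mathcal{A}-(X,X,Z)\cdot\mathcal{H}\|$), with solution $(U,U,W)$ and core $\mathcal{F}=\mathcal{A}\cdot(U,U,W)$. Solutions are equivalence classes under $(U,U,W)\mapsto(UQ_1,UQ_1,WQ_3)$, $Q_1,Q_3$ orthogonal; uniqueness means uniqueness of the class. *)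

From HB Require Import structures.
From mathcomp Require Import all_boot all_order all_algebra.
From mathcomp Require Import classical_sets reals.
Set Implicit Arguments. Unset Strict Implicit. Unset Printing Implicit Defensive.
Import Order.TTheory GRing.Theory Num.Theory.
Local Open Scope ring_scope.


Definition tensor (R : Type) (a b c : nat) := 'I_a -> 'I_b -> 'I_c -> R.

Section Tensors.
Variable R : realType.

Definition mmul (a b c p q r : nat) (X : 'M[R]_(a, p)) (Y : 'M[R]_(b, q))
  (Z : 'M[R]_(c, r)) (H : tensor R p q r) : tensor R a b c :=
  fun i j k => \sum_(al < p) \sum_(be < q) \sum_(ga < r)
                 X i al * Y j be * Z k ga * H al be ga.

Definition contract (a b c p q r : nat) (A : tensor R a b c)
  (X : 'M[R]_(a, p)) (Y : 'M[R]_(b, q)) (Z : 'M[R]_(c, r)) : tensor R p q r :=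
  mmul X^T Y^T Z^T A.

Definition tsub (a b c : nat) (A B : tensor R a b c) : tensor R a b c :=
  fun i j k => A i j k - B i j k.

Definition sqnorm (a b c : nat) (A : tensor R a b c) : R :=
  \sum_(i < a) \sum_(j < b) \sum_(k < c) A i j k ^+ 2.
Definition frob (a b c : nat) (A : tensor R a b c) : R := Num.sqrt (sqnorm A).

Definition sym12 (m n : nat) (A : tensor R m m n) : Prop :=
  forall i j k, A i j k = A j i k.

Definition nonneg (a b c : nat) (A : tensor R a b c) : Prop :=
  forall i j k, 0 <= A i j k.

Definition reducible12 (m n : nat) (A : tensor R m m n) : Prop :=
  exists (I : {set 'I_m}) (K : {set 'I_n}),
    [/\ I != finset.set0, I != [set: 'I_m], K != finset.set0 &
      forall i j k, i \in I -> j \notin I -> k \in K ->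
        A i j k = 0 /\ A j i k = 0].

Definition reducible3 (m n : nat) (A : tensor R m m n) : Prop :=
  exists (I : {set 'I_m}) (K : {set 'I_n}),
    [/\ I != finset.set0, I != [set: 'I_m], K != finset.set0 &
      forall i j k, i \in I -> j \in I -> k \in K -> A i j k = 0].

Definition reducible (m n : nat) (A : tensor R m m n) : Prop :=
  reducible12 A \/ reducible3 A.

Definition irreducible (m n : nat) (A : tensor R m m n) : Prop :=
  ~ reducible A.

Definition blockT (m1 m2 n : nat) (A1 : tensor R m1 m1 n) (A2 : tensor R m2 m2 n)
  : tensor R (m1 + m2) (m1 + m2) n :=
  fun i j k => match split i, split j with
               | inl i', inl j' => A1 i' j' k
               | inr i', inr j' => A2 i' j' k
               | _, _ => 0
               end.

Definition orthonormal (a r : nat) (X : 'M[R]_(a, r)) : Prop :=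
  X^T *m X = 1%:M.

Definition phi (r3 k n : nat) (B : tensor R k k n) : R :=
  inf (fun x : R => exists (X : 'M[R]_(k, 2)) (Z : 'M[R]_(n, r3))
                          (H : tensor R 2 2 r3),
         [/\ orthonormal X, orthonormal Z & x = sqnorm (tsub B (mmul X X Z H))]).

Definition is_solution (r1 r3 m n : nat) (A : tensor R m m n)
  (U : 'M[R]_(m, r1)) (W : 'M[R]_(n, r3)) : Prop :=
  [/\ orthonormal U, orthonormal W &
    forall (X : 'M[R]_(m, r1)) (Z : 'M[R]_(n, r3)),
      orthonormal X -> orthonormal Z ->
      frob (contract A X X Z) <= frob (contract A U U W)].

Definition unique_solution (r1 r3 m n : nat) (A : tensor R m m n) : Prop :=
  (exists U W, @is_solution r1 r3 m n A U W) /\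
  forall U W U' W', @is_solution r1 r3 m n A U W -> @is_solution r1 r3 m n A U' W' ->
    exists (Q1 : 'M[R]_r1) (Q3 : 'M[R]_r3),
      [/\ orthonormal Q1, orthonormal Q3, U' = U *m Q1 & W' = W *m Q3].

End Tensors.

From Pilot Require Import Defs.
From HB Require Import structures.
From mathcomp Require Import all_boot all_order all_algebra.
From mathcomp Require Import boolp classical_sets reals ring lra.
Import Order.TTheory GRing.Theory Num.Theory.
Local Open Scope ring_scope.
Set Implicit Arguments. Unset Strict Implicit.

(* The sign flip D = diag(I, -I) is an orthogonal symmetry of A in modes 1
   and 2, so with (U, U, W) also (DU, DU, W) is a solution.  By uniqueness
   DU = UQ for an orthogonal Q, which is then symmetric: Q = U^T D U.  A
   symmetric orthogonal 2x2 matrix is diagonalised by a rotation Rm, and the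
   rotated factor U0 = U Rm satisfies D U0 = U0 diag(e0, e1) with e0, e1 = +-1.
   Hence each column of U0 lives on a single block.  If both columns lived on
   the same block, A would be approximated no better than that block alone
   (Pythagoras for Tucker approximations), contradicting the hypotheses on phi;
   so the first column lives on block 1, the second on block 2, and since A
   has no off-diagonal blocks the core has diagonal 3-slices. *)

(* [orthonormal] also names a notion of mathcomp's sesquilinear forms. *)
Local Notation orthonormal := Defs.orthonormal.

Section TensorAlgebra.
Variable R : realType.

Definition tsum (a b c : nat) (F : 'I_a -> 'I_b -> 'I_c -> R) : R :=
  \sum_(i < a) \sum_(j < b) \sum_(k < c) F i j k.

Definition inner (a b c : nat) (A B : tensor R a b c) : R :=
  tsum (fun i j k => A i j k * B i j k).

Lemma tsum_ext (a b c : nat) (F G : 'I_a -> 'I_b -> 'I_c -> R) :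
  (forall i j k, F i j k = G i j k) -> tsum F = tsum G.
Proof. by move=> FG; do 3 (apply: eq_bigr => ? _). Qed.

Lemma tsum_lin (a b c : nat) (x y z : R) (F G H : 'I_a -> 'I_b -> 'I_c -> R) :
  tsum (fun i j k => x * F i j k + y * G i j k + z * H i j k) =
  x * tsum F + y * tsum G + z * tsum H.
Proof.
rewrite /tsum !mulr_sumr -!big_split; apply: eq_bigr => i _.
rewrite !mulr_sumr -!big_split; apply: eq_bigr => j _.
by rewrite !mulr_sumr -!big_split.
Qed.

Lemma sqnormE (a b c : nat) (A : tensor R a b c) : sqnorm A = inner A A.
Proof. by apply: tsum_ext => i j k; rewrite expr2. Qed.

Lemma innerC (a b c : nat) (A B : tensor R a b c) : inner A B = inner B A.
Proof. by apply: tsum_ext => i j k; rewrite mulrC. Qed.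

Lemma sqnorm_ge0 (a b c : nat) (A : tensor R a b c) : 0 <= sqnorm A.
Proof. by do 3 (apply: sumr_ge0 => ? _); apply: sqr_ge0. Qed.

Lemma sqnorm_tsubxx (a b c : nat) (A : tensor R a b c) : sqnorm (tsub A A) = 0.
Proof. by rewrite /sqnorm; do 3 (rewrite big1 // => ? _); rewrite /tsub subrr expr0n. Qed.

Lemma sqnorm_sub (a b c : nat) (A B : tensor R a b c) :
  sqnorm (tsub A B) = sqnorm A - 2 * inner A B + sqnorm B.
Proof.
transitivity (1 * inner A A + (-2) * inner A B + 1 * inner B B).
  by rewrite -tsum_lin sqnormE; apply: tsum_ext => i j k; rewrite /tsub; ring.
by rewrite !sqnormE; ring.
Qed.


Definition md1 (p a q r : nat) (X : 'M[R]_(p, a)) (H : tensor R a q r) :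
  tensor R p q r := fun i b c => \sum_(x < a) X i x * H x b c.
Definition md2 (p a q r : nat) (Y : 'M[R]_(q, a)) (H : tensor R p a r) :
  tensor R p q r := fun i b c => \sum_(x < a) Y b x * H i x c.
Definition md3 (p a q r : nat) (Z : 'M[R]_(r, a)) (H : tensor R p q a) :
  tensor R p q r := fun i b c => \sum_(x < a) Z c x * H i b x.

Lemma mmul_md (a b c p q r : nat) (X : 'M[R]_(a, p)) (Y : 'M[R]_(b, q))
  (Z : 'M[R]_(c, r)) (H : tensor R p q r) :
  mmul X Y Z H = md1 X (md2 Y (md3 Z H)).
Proof.
apply/funext => i; apply/funext => j; apply/funext => k.
rewrite /mmul /md1 /md2 /md3; apply: eq_bigr => al _; rewrite mulr_sumr.
by apply: eq_bigr => be _; rewrite !mulr_sumr; apply: eq_bigr => ga _; rewrite !mulrA.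
Qed.

Lemma md1M (p a s q r : nat) (X : 'M[R]_(p, a)) (X' : 'M[R]_(a, s))
  (H : tensor R s q r) : md1 X (md1 X' H) = md1 (X *m X') H.
Proof.
apply/funext => i; apply/funext => j; apply/funext => k; rewrite /md1.
under eq_bigr do rewrite mulr_sumr. rewrite exchange_big; apply: eq_bigr => y _.
by rewrite !mxE mulr_suml; apply: eq_bigr => x _; rewrite mulrA.
Qed.

Lemma md2M (p a s q r : nat) (Y : 'M[R]_(q, a)) (Y' : 'M[R]_(a, s))
  (H : tensor R p s r) : md2 Y (md2 Y' H) = md2 (Y *m Y') H.
Proof.
apply/funext => i; apply/funext => j; apply/funext => k; rewrite /md2.
under eq_bigr do rewrite mulr_sumr. rewrite exchange_big; apply: eq_bigr => y _.
by rewrite !mxE mulr_suml; apply: eq_bigr => x _; rewrite mulrA.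
Qed.

Lemma md3M (p q a s r : nat) (Z : 'M[R]_(r, a)) (Z' : 'M[R]_(a, s))
  (H : tensor R p q s) : md3 Z (md3 Z' H) = md3 (Z *m Z') H.
Proof.
apply/funext => i; apply/funext => j; apply/funext => k; rewrite /md3.
under eq_bigr do rewrite mulr_sumr. rewrite exchange_big; apply: eq_bigr => y _.
by rewrite !mxE mulr_suml; apply: eq_bigr => x _; rewrite mulrA.
Qed.

Lemma md12 (p a q b r : nat) (X : 'M[R]_(p, a)) (Y : 'M[R]_(q, b))
  (H : tensor R a b r) : md2 Y (md1 X H) = md1 X (md2 Y H).
Proof.
apply/funext => i; apply/funext => j; apply/funext => k; rewrite /md1 /md2.
under eq_bigr do rewrite mulr_sumr. rewrite exchange_big; apply: eq_bigr => y _.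
by rewrite mulr_sumr; apply: eq_bigr => x _; rewrite mulrCA.
Qed.

Lemma md13 (p a q r c : nat) (X : 'M[R]_(p, a)) (Z : 'M[R]_(r, c))
  (H : tensor R a q c) : md3 Z (md1 X H) = md1 X (md3 Z H).
Proof.
apply/funext => i; apply/funext => j; apply/funext => k; rewrite /md1 /md3.
under eq_bigr do rewrite mulr_sumr. rewrite exchange_big; apply: eq_bigr => y _.
by rewrite mulr_sumr; apply: eq_bigr => x _; rewrite mulrCA.
Qed.

Lemma md23 (p q b r c : nat) (Y : 'M[R]_(q, b)) (Z : 'M[R]_(r, c))
  (H : tensor R p b c) : md3 Z (md2 Y H) = md2 Y (md3 Z H).
Proof.
apply/funext => i; apply/funext => j; apply/funext => k; rewrite /md2 /md3.
under eq_bigr do rewrite mulr_sumr. rewrite exchange_big; apply: eq_bigr => y _.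
by rewrite mulr_sumr; apply: eq_bigr => x _; rewrite mulrCA.
Qed.

Lemma mmulM (a b c p q r s t u : nat) (X : 'M[R]_(a, p)) (Y : 'M[R]_(b, q))
  (Z : 'M[R]_(c, r)) (X' : 'M[R]_(p, s)) (Y' : 'M[R]_(q, t)) (Z' : 'M[R]_(r, u))
  (H : tensor R s t u) :
  mmul X Y Z (mmul X' Y' Z' H) = mmul (X *m X') (Y *m Y') (Z *m Z') H.
Proof. by rewrite !mmul_md md13 md12 md1M md23 md2M md3M. Qed.

Lemma sum_delta (k : nat) (i : 'I_k) (F : 'I_k -> R) :
  \sum_(x < k) (1%:M : 'M[R]_k) i x * F x = F i.
Proof.
rewrite (bigD1 i) //= big1 ?addr0 => [|x xi]; first by rewrite mxE eqxx mul1r.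
by rewrite mxE eq_sym (negbTE xi) mul0r.
Qed.

Lemma mmul1 (a b c : nat) (H : tensor R a b c) : mmul 1%:M 1%:M 1%:M H = H.
Proof.
apply/funext => i; apply/funext => j; apply/funext => k.
by rewrite mmul_md /md1 /md2 /md3 !sum_delta.
Qed.

Lemma md1_adj (p a q r : nat) (X : 'M[R]_(p, a)) (H : tensor R a q r)
  (B : tensor R p q r) : inner (md1 X H) B = inner H (md1 X^T B).
Proof.
rewrite /inner /tsum /md1.
under eq_bigr do under eq_bigr do under eq_bigr do rewrite mulr_suml.
under eq_bigr do under eq_bigr do rewrite exchange_big.
under eq_bigr do rewrite exchange_big.
rewrite exchange_big; apply: eq_bigr => x _.
rewrite exchange_big; apply: eq_bigr => j _.
rewrite exchange_big; apply: eq_bigr => k _.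
by rewrite mulr_sumr; apply: eq_bigr => i _; rewrite mxE; ring.
Qed.

Lemma md2_adj (p a q r : nat) (Y : 'M[R]_(q, a)) (H : tensor R p a r)
  (B : tensor R p q r) : inner (md2 Y H) B = inner H (md2 Y^T B).
Proof.
rewrite /inner /tsum /md2; apply: eq_bigr => i _.
under eq_bigr do under eq_bigr do rewrite mulr_suml.
under eq_bigr do rewrite exchange_big.
rewrite exchange_big; apply: eq_bigr => x _.
rewrite exchange_big; apply: eq_bigr => k _.
by rewrite mulr_sumr; apply: eq_bigr => j _; rewrite mxE; ring.
Qed.

Lemma md3_adj (p q a r : nat) (Z : 'M[R]_(r, a)) (H : tensor R p q a)
  (B : tensor R p q r) : inner (md3 Z H) B = inner H (md3 Z^T B).
Proof.
rewrite /inner /tsum /md3; apply: eq_bigr => i _; apply: eq_bigr => j _.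
under eq_bigr do rewrite mulr_suml.
rewrite exchange_big; apply: eq_bigr => x _.
by rewrite mulr_sumr; apply: eq_bigr => k _; rewrite mxE; ring.
Qed.

Lemma mmul_adj (a b c p q r : nat) (X : 'M[R]_(a, p)) (Y : 'M[R]_(b, q))
  (Z : 'M[R]_(c, r)) (H : tensor R p q r) (B : tensor R a b c) :
  inner (mmul X Y Z H) B = inner H (mmul X^T Y^T Z^T B).
Proof. by rewrite !mmul_md md1_adj md2_adj md3_adj md12 md13 md23. Qed.

Lemma sqnorm_mmul (a b c p q r : nat) (X : 'M[R]_(a, p)) (Y : 'M[R]_(b, q))
  (Z : 'M[R]_(c, r)) (H : tensor R p q r) :
  orthonormal X -> orthonormal Y -> orthonormal Z ->
  sqnorm (mmul X Y Z H) = sqnorm H.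
Proof.
by move=> oX oY oZ; rewrite !sqnormE mmul_adj mmulM oX oY oZ mmul1.
Qed.

Lemma residual_decomp (k n p r : nat) (B : tensor R k k n) (X : 'M[R]_(k, p))
  (Z : 'M[R]_(n, r)) (H : tensor R p p r) :
  orthonormal X -> orthonormal Z ->
  sqnorm (tsub B (mmul X X Z H)) =
  sqnorm B - sqnorm (contract B X X Z) + sqnorm (tsub (contract B X X Z) H).
Proof.
move=> oX oZ; rewrite !sqnorm_sub sqnorm_mmul // [inner B _]innerC mmul_adj.
rewrite -/(contract B X X Z) [inner (contract _ _ _ _) H]innerC.
by rewrite (sqnormE (contract B X X Z)); ring.
Qed.

End TensorAlgebra.

Section Solutions.
Variable R : realType.

Lemma orthonormal1 (k : nat) : orthonormal (1%:M : 'M[R]_k).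
Proof. by rewrite /orthonormal trmx1 mulmx1. Qed.

Lemma orthonormalM (a b c : nat) (X : 'M[R]_(a, b)) (Q : 'M[R]_(b, c)) :
  orthonormal X -> orthonormal Q -> orthonormal (X *m Q).
Proof.
by move=> oX oQ; rewrite /orthonormal trmx_mul mulmxA -(mulmxA Q^T) oX mulmx1.
Qed.

Lemma orthonormal_tr (k : nat) (Q : 'M[R]_k) : orthonormal Q -> orthonormal Q^T.
Proof. by rewrite /orthonormal trmxK; apply: mulmx1C. Qed.

Lemma contractM (a b c p q r s t u : nat) (A : tensor R a b c)
  (P : 'M[R]_(a, p)) (P' : 'M[R]_(b, q)) (P'' : 'M[R]_(c, r))
  (X : 'M[R]_(p, s)) (Y : 'M[R]_(q, t)) (Z : 'M[R]_(r, u)) :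
  contract A (P *m X) (P' *m Y) (P'' *m Z) = contract (contract A P P' P'') X Y Z.
Proof. by rewrite /contract mmulM !trmx_mul. Qed.

(* A solution of the rank-(2,2,r3) problem realises the infimum [phi]:
   the best core for (U,U,W) is F = B.(U,U,W), with error |B|^2 - |F|^2. *)
Lemma solution_le_phi (r3 k n : nat) (B : tensor R k k n) (U : 'M[R]_(k, 2))
  (W : 'M[R]_(n, r3)) :
  is_solution B U W -> sqnorm B - sqnorm (contract B U U W) <= phi r3 B.
Proof.
move=> [oU oW opt]; apply: lb_le_inf.
  by exists (sqnorm (tsub B (mmul U U W (contract B U U W)))), U, W, (contract B U U W).
move=> x [X [Z [H [oX oZ ->]]]]; rewrite residual_decomp //.
have := opt X Z oX oZ; rewrite /frob ler_sqrt ?sqnorm_ge0 // => le_core.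
by have := sqnorm_ge0 (tsub (contract B X X Z) H); lra.
Qed.

Lemma phi_le_residual (r3 k n : nat) (B : tensor R k k n) (X : 'M[R]_(k, 2))
  (Z : 'M[R]_(n, r3)) (H : tensor R 2 2 r3) :
  orthonormal X -> orthonormal Z -> phi r3 B <= sqnorm (tsub B (mmul X X Z H)).
Proof.
move=> oX oZ; apply: ge_inf; last by exists X, Z, H.
by exists 0 => y [X' [Z' [H' [_ _ ->]]]]; apply: sqnorm_ge0.
Qed.

Lemma solutionMr (r1 r3 m n : nat) (A : tensor R m m n) (U : 'M[R]_(m, r1))
  (W : 'M[R]_(n, r3)) (Q : 'M[R]_r1) :
  is_solution A U W -> orthonormal Q -> is_solution A (U *m Q) W.
Proof.
move=> [oU oW opt] oQ; split => [||X Z oX oZ]; [exact: orthonormalM | by [] |].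
have -> : contract A (U *m Q) (U *m Q) W = contract (contract A U U W) Q Q 1%:M.
  by rewrite -contractM mulmx1.
rewrite /frob {2}/contract trmx1 sqnorm_mmul; first exact: opt.
- exact: orthonormal_tr.
- exact: orthonormal_tr.
- exact: orthonormal1.
Qed.

Lemma solutionMl (r1 r3 m n : nat) (A : tensor R m m n) (U : 'M[R]_(m, r1))
  (W : 'M[R]_(n, r3)) (P : 'M[R]_m) :
  orthonormal P -> contract A P P 1%:M = A ->
  is_solution A U W -> is_solution A (P *m U) W.
Proof.
move=> oP symA [oU oW opt]; have hc : contract A (P *m U) (P *m U) W = contract A U U W.
  by rewrite -{1}[W]mul1mx contractM symA.
split; [exact: orthonormalM | by [] | move=> X Z oX oZ; rewrite hc; exact: opt].
Qed.

Definition subtensor (k m n : nat) (A : tensor R m m n) (f : 'I_k -> 'I_m) :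
  tensor R k k n := fun i j c => A (f i) (f j) c.

Definition embedmx (k m : nat) (f : 'I_k -> 'I_m) : 'M[R]_(m, k) :=
  \matrix_(i, j) (i == f j)%:R.

Lemma sum_delta_l (k : nat) (y : 'I_k) (F : 'I_k -> R) :
  \sum_(x < k) (x == y)%:R * F x = F y.
Proof.
rewrite (bigD1 y) //= eqxx mul1r big1 ?addr0 // => x /negbTE ->.
by rewrite mul0r.
Qed.

Lemma embedmx_orthonormal (k m : nat) (f : 'I_k -> 'I_m) :
  injective f -> orthonormal (embedmx f).
Proof.
move=> injf; apply/matrixP => a b; rewrite !mxE.
under eq_bigr do rewrite !mxE.
by rewrite sum_delta_l (inj_eq injf).
Qed.

Lemma contract_embedmx (k m n : nat) (A : tensor R m m n) (f : 'I_k -> 'I_m) :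
  contract A (embedmx f) (embedmx f) 1%:M = subtensor A f.
Proof.
apply/funext => i; apply/funext => j; apply/funext => c.
rewrite /contract trmx1 mmul_md /md1 /md2 /md3.
under eq_bigr do under eq_bigr do rewrite sum_delta !mxE.
under eq_bigr do rewrite sum_delta_l !mxE.
by rewrite sum_delta_l.
Qed.

Lemma embedmx_factor (k m r : nat) (f : 'I_k -> 'I_m) (U : 'M[R]_(m, r)) :
  injective f -> (forall i c, i \notin codom f -> U i c = 0) ->
  U = embedmx f *m \matrix_(j, c) U (f j) c.
Proof.
move=> injf offU; apply/matrixP => i c; rewrite mxE.
under eq_bigr do rewrite !mxE.
have [/codomP [j ->]|fi] := boolP (i \in codom f).
  rewrite (bigD1 j) //= eqxx mul1r big1 ?addr0 // => j' /negbTE nj.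
  by rewrite (inj_eq injf) eq_sym nj mul0r.
rewrite offU // big1 // => j _; case: eqP => [fij|_]; last by rewrite mul0r.
by move: fi; rewrite fij codom_f.
Qed.

Lemma subtensor_phi_le (r3 k m n : nat) (A : tensor R m m n) (f : 'I_k -> 'I_m)
  (U : 'M[R]_(m, 2)) (W : 'M[R]_(n, r3)) :
  injective f -> is_solution A U W ->
  (forall i c, i \notin codom f -> U i c = 0) ->
  phi r3 (subtensor A f) + (sqnorm A - sqnorm (subtensor A f)) <= phi r3 A.
Proof.
move=> injf sol offU; have [oU oW _] := sol.
set X := \matrix_(j, c) U (f j) c.
have UE : U = embedmx f *m X := embedmx_factor injf offU.
have oX : orthonormal X.
  by rewrite /orthonormal -oU UE trmx_mul mulmxA -(mulmxA X^T) (embedmx_orthonormal injf) mulmx1.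
have core : contract A U U W = contract (subtensor A f) X X W.
  by rewrite UE -{1}[W]mul1mx contractM contract_embedmx.
have := solution_le_phi sol; rewrite core.
have := phi_le_residual (subtensor A f) (contract (subtensor A f) X X W) oX oW.
by rewrite residual_decomp // sqnorm_tsubxx; lra.
Qed.

End Solutions.

Lemma ord2P (i : 'I_2) : i = ord0 \/ i = ord_max.
Proof. by case: i => [[|[|i]] Hi]; [left; apply: val_inj|right; apply: val_inj|]. Qed.

Section Orthogonal2.
Variable R : realType.

Definition mk2 (a b c d : R) : 'M[R]_2 := \matrix_(i, j)
  if i == ord0 then (if j == ord0 then a else b) else (if j == ord0 then c else d).

Lemma mk2E (M : 'M[R]_2) :
  M = mk2 (M ord0 ord0) (M ord0 ord_max) (M ord_max ord0) (M ord_max ord_max).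
Proof. by apply/matrixP => i j; rewrite mxE; case: (ord2P i) => ->; case: (ord2P j) => ->. Qed.

Lemma mk2_inj a b c d a' b' c' d' : mk2 a b c d = mk2 a' b' c' d' ->
  [/\ a = a', b = b', c = c' & d = d'].
Proof.
move=> eqM; have entry i j := congr1 (fun M : 'M[R]_2 => M i j) eqM.
by have := entry ord0 ord0; have := entry ord0 ord_max;
   have := entry ord_max ord0; have := entry ord_max ord_max; rewrite /= !mxE.
Qed.

Lemma mk2_mul a b c d a' b' c' d' :
  mk2 a b c d *m mk2 a' b' c' d' =
  mk2 (a * a' + b * c') (a * b' + b * d') (c * a' + d * c') (c * b' + d * d').
Proof.
apply/matrixP => i j; rewrite !mxE !big_ord_recl big_ord0 !mxE addr0.
by case: (ord2P i) => ->; case: (ord2P j) => ->.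
Qed.

Lemma mk2_tr a b c d : (mk2 a b c d)^T = mk2 a c b d.
Proof. by apply/matrixP => i j; rewrite !mxE; case: (ord2P i) => ->; case: (ord2P j) => ->. Qed.

Lemma mk2_1 : (1%:M : 'M[R]_2) = mk2 1 0 0 1.
Proof. by apply/matrixP => i j; rewrite !mxE; case: (ord2P i) => ->; case: (ord2P j) => ->. Qed.

Definition erow (e0 e1 : R) : 'rV[R]_2 := \row_c (if c == ord0 then e0 else e1).

Lemma mk2_diag e0 e1 : diag_mx (erow e0 e1) = mk2 e0 0 0 e1.
Proof. by apply/matrixP => i j; rewrite !mxE; case: (ord2P i) => ->; case: (ord2P j) => ->. Qed.

Lemma sqr_eq1 (x : R) : x * x = 1 -> x = 1 \/ x = -1.
Proof. by move/eqP; rewrite -expr2 sqrf_eq1 => /orP [/eqP|/eqP]; [left|right]. Qed.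

Lemma sym_orthonormal2 (Q : 'M[R]_2) : Q^T = Q -> orthonormal Q ->
  [\/ Q = mk2 1 0 0 1, Q = mk2 (-1) 0 0 (-1) |
      exists p q, p * p + q * q = 1 /\ Q = mk2 p q q (- p)].
Proof.
rewrite [Q]mk2E; move: (Q ord0 ord0) (Q ord0 ord_max) (Q ord_max ord0) (Q ord_max ord_max) => p q q' r.
rewrite mk2_tr => /mk2_inj [_ -> _ _].
rewrite /orthonormal mk2_tr mk2_mul mk2_1 => /mk2_inj [pq1 pqr _ qr1].
have [q0|qn0] := eqVneq q 0.
  rewrite q0 mulr0 addr0 in pq1; rewrite q0 mulr0 add0r in qr1; rewrite q0.
  have [->|->] := sqr_eq1 pq1; have [->|->] := sqr_eq1 qr1.
  - by constructor 1.
  - by constructor 3; exists 1, 0; split; [ring|].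
  - by constructor 3; exists (-1), 0; rewrite opprK; split; [ring|].
  - by constructor 2.
constructor 3; exists p, q; split => //; congr mk2.
have : q * (p + r) == 0 by rewrite mulrDr [q * p]mulrC pqr.
by rewrite mulf_eq0 (negbTE qn0) /= => /eqP; lra.
Qed.

(* Every reflection is diagonalised by a rotation (or, for -diag(1,-1), by the
   swap of coordinates). *)
Lemma reflection_diag (p q : R) : p * p + q * q = 1 ->
  exists Rm : 'M[R]_2, orthonormal Rm /\ mk2 p q q (- p) *m Rm = Rm *m mk2 1 0 0 (-1).
Proof.
move=> pq1; have [pN1|pN1] := eqVneq p (-1).
  have q0 : q = 0.
    have : q * q == 0 by rewrite pN1 in pq1; apply/eqP; lra.
    by rewrite mulf_eq0 orbb => /eqP.
  exists (mk2 0 1 1 0); rewrite /orthonormal mk2_tr !mk2_mul mk2_1 pN1 q0.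
  by split; congr mk2; ring.
pose t := (1 + p) ^+ 2 + q ^+ 2.
have t_gt0 : 0 < t.
  have : 0 < (1 + p) ^+ 2 by rewrite exprn_even_gt0 //; apply: contra pN1 => /eqP h; apply/eqP; lra.
  by rewrite /t => ?; have := sqr_ge0 q; lra.
pose s := Num.sqrt t.
have s2 : s ^+ 2 = t by rewrite sqr_sqrtr // ltW.
have s_neq0 : s != 0 by rewrite /s gt_eqF // sqrtr_gt0.
have t_over_s2 : t / s ^+ 2 = 1 by rewrite s2 divff // gt_eqF.
exists (mk2 ((1 + p) / s) (- (q / s)) (q / s) ((1 + p) / s)).
rewrite /orthonormal mk2_tr !mk2_mul mk2_1; split; congr mk2.
- by transitivity (t / s ^+ 2); [rewrite /t; field | exact: t_over_s2].
- by ring.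
- by ring.
- by transitivity (t / s ^+ 2); [rewrite /t; field | exact: t_over_s2].
- apply/eqP; rewrite -subr_eq0; apply/eqP.
  by transitivity ((p * p + q * q - 1) / s); [field | rewrite pq1 subrr mul0r].
- by ring.
- by ring.
- apply/eqP; rewrite -subr_eq0; apply/eqP.
  by transitivity (- (p * p + q * q - 1) / s); [field | rewrite pq1 subrr oppr0 mul0r].
Qed.

Lemma sym_orthonormal2_diag (Q : 'M[R]_2) : Q^T = Q -> orthonormal Q ->
  exists (Rm : 'M[R]_2) (e0 e1 : R),
    [/\ orthonormal Rm, Q *m Rm = Rm *m diag_mx (erow e0 e1) &
        [\/ e0 = 1 /\ e1 = -1, e0 = 1 /\ e1 = 1 | e0 = -1 /\ e1 = -1]].
Proof.
move=> symQ oQ.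
case: (sym_orthonormal2 symQ oQ) => [->|->|[p [q [pq1 ->]]]].
- exists 1%:M, 1, 1.
  by split; [exact: orthonormal1 | rewrite mk2_diag mulmx1 mul1mx | constructor 2].
- exists 1%:M, (-1), (-1).
  by split; [exact: orthonormal1 | rewrite mk2_diag mulmx1 mul1mx | constructor 3].
- have [Rm [oR eig]] := reflection_diag pq1.
  by exists Rm, 1, (-1); rewrite mk2_diag; split => //; constructor 1.
Qed.

End Orthogonal2.


Section BlockDiagonal.
Variables (R : realType) (m1 m2 n : nat).
Variables (A1 : tensor R m1 m1 n) (A2 : tensor R m2 m2 n).
Local Notation A := (blockT A1 A2).

Lemma split_lshift (i : 'I_m1) : split (lshift m2 i) = inl i.
Proof. exact: (unsplitK (inl i : 'I_m1 + 'I_m2)). Qed.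

Lemma split_rshift (i : 'I_m2) : split (rshift m1 i) = inr i.
Proof. exact: (unsplitK (inr i : 'I_m1 + 'I_m2)). Qed.

Lemma blockT_ll i j k : A (lshift m2 i) (lshift m2 j) k = A1 i j k.
Proof. by rewrite /blockT !split_lshift. Qed.

Lemma blockT_rr i j k : A (rshift m1 i) (rshift m1 j) k = A2 i j k.
Proof. by rewrite /blockT !split_rshift. Qed.

Lemma blockT_lr i j k : A (lshift m2 i) (rshift m1 j) k = 0.
Proof. by rewrite /blockT split_lshift split_rshift. Qed.

Lemma blockT_rl i j k : A (rshift m1 i) (lshift m2 j) k = 0.
Proof. by rewrite /blockT split_lshift split_rshift. Qed.

Lemma sqnorm_blockT : sqnorm A = sqnorm A1 + sqnorm A2.
Proof.
rewrite /sqnorm big_split_ord /=; congr (_ + _).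
  apply: eq_bigr => i _; rewrite big_split_ord /= [X in _ + X]big1 ?addr0.
    by apply: eq_bigr => j _; apply: eq_bigr => k _; rewrite blockT_ll.
  by move=> j _; rewrite big1 // => k _; rewrite blockT_lr expr0n.
apply: eq_bigr => i _; rewrite big_split_ord /= [X in X + _]big1 ?add0r.
  by apply: eq_bigr => j _; apply: eq_bigr => k _; rewrite blockT_rr.
by move=> j _; rewrite big1 // => k _; rewrite blockT_rl expr0n.
Qed.

Lemma block_phi_l (r3 : nat) (U : 'M[R]_(m1 + m2, 2)) (W : 'M[R]_(n, r3)) :
  is_solution A U W -> (forall i c, U (rshift m1 i) c = 0) ->
  phi r3 A1 + sqnorm A2 <= phi r3 A.
Proof.
move=> sol U2; have subA : subtensor A (@lshift m1 m2) = A1.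
  by apply/funext => i; apply/funext => j; apply/funext => k; rewrite /subtensor blockT_ll.
have := subtensor_phi_le (@lshift_inj m1 m2) sol.
rewrite subA sqnorm_blockT addrAC subrr add0r; apply => i c.
by case: (split_ordP i) => j ->; rewrite ?codom_f ?U2.
Qed.

Lemma block_phi_r (r3 : nat) (U : 'M[R]_(m1 + m2, 2)) (W : 'M[R]_(n, r3)) :
  is_solution A U W -> (forall i c, U (lshift m2 i) c = 0) ->
  phi r3 A2 + sqnorm A1 <= phi r3 A.
Proof.
move=> sol U1; have subA : subtensor A (@rshift m1 m2) = A2.
  by apply/funext => i; apply/funext => j; apply/funext => k; rewrite /subtensor blockT_rr.
have := subtensor_phi_le (@rshift_inj m1 m2) sol.
rewrite subA sqnorm_blockT addrK; apply => i c.
by case: (split_ordP i) => j ->; rewrite ?codom_f ?U1.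
Qed.

Definition block_sign (i : 'I_(m1 + m2)) : R := if split i is inl _ then 1 else -1.
Definition block_signmx : 'M[R]_(m1 + m2) := diag_mx (\row_i block_sign i).

Lemma block_sign_sqr i : block_sign i * block_sign i = 1.
Proof. by rewrite /block_sign; case: split => _; rewrite ?mulr1 ?mulrNN ?mulr1. Qed.

Lemma block_signmx_orthonormal : orthonormal block_signmx.
Proof.
apply/matrixP => i j; rewrite tr_diag_mx mul_diag_mx !mxE.
by case: eqP => [->|_]; rewrite ?mulr1n ?block_sign_sqr ?mulr0n ?mulr0.
Qed.

Lemma sum_diag (k : nat) (v : 'rV[R]_k) (i : 'I_k) (F : 'I_k -> R) :
  \sum_(x < k) diag_mx v i x * F x = v 0 i * F i.
Proof.
rewrite (bigD1 i) //= big1 ?addr0 => [|x xi]; first by rewrite mxE eqxx mulr1n.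
by rewrite mxE eq_sym (negbTE xi) mulr0n mul0r.
Qed.

Lemma contract_block_signmx : contract A block_signmx block_signmx 1%:M = A.
Proof.
apply/funext => i; apply/funext => j; apply/funext => k.
rewrite /contract trmx1 tr_diag_mx mmul_md /md1 /md2 /md3.
under eq_bigr do under eq_bigr do rewrite sum_delta.
under eq_bigr do rewrite (sum_diag _ j (fun y => A _ y k)).
rewrite (sum_diag _ i (fun x => _ * A x j k)) !mxE /blockT /block_sign.
by case: split => ?; case: split => ?; ring.
Qed.

Lemma block_signmx_eigen_zero (r : nat) (U : 'M[R]_(m1 + m2, r)) (e : 'rV[R]_r) i c :
  block_signmx *m U = U *m diag_mx e -> e 0 c = - block_sign i -> U i c = 0.
Proof.
move=> /(congr1 (fun M : 'M[R]_(m1 + m2, r) => M i c)) /=; rewrite mul_diag_mx mul_mx_diag !mxE => eig ec.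
have : U i c = - U i c.
  by rewrite -{1}[U i c]mul1r -(block_sign_sqr i) -mulrA eig ec mulrN mulrN mulrCA block_sign_sqr mulr1.
by lra.
Qed.

Lemma blockT_core_offdiag (r3 : nat) (U : 'M[R]_(m1 + m2, 2)) (W : 'M[R]_(n, r3)) :
  (forall i, U (lshift m2 i) ord_max = 0) -> (forall i, U (rshift m1 i) ord0 = 0) ->
  forall (a b : 'I_2) (k : 'I_r3), a != b -> contract A U U W a b k = 0.
Proof.
move=> U1 U2 a b k ab; rewrite /contract /mmul.
rewrite big1 // => al _; rewrite big1 // => be _; rewrite big1 // => ga _.
have cross : U al a * U be b * A al be ga = 0.
  case: (split_ordP al) => i ->; case: (split_ordP be) => j ->;
    rewrite ?blockT_lr ?blockT_rl ?mulr0 //;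
    by case: (ord2P a) ab => ->; case: (ord2P b) => -> // _;
       rewrite ?U1 ?U2 ?mulr0 ?mul0r.
by rewrite !mxE mulrAC cross mul0r.
Qed.

End BlockDiagonal.

Theorem proposition5p2 (R : realType) (m1 m2 n : nat)
  (A1 : tensor R m1 m1 n) (A2 : tensor R m2 m2 n) :
  sym12 (blockT A1 A2) -> nonneg (blockT A1 A2) ->
  irreducible A1 -> irreducible A2 ->
  forall r3 : nat, (r3 = 2%N \/ r3 = 1%N) ->
  phi r3 (blockT A1 A2) < phi r3 A1 + sqnorm A2 ->
  phi r3 (blockT A1 A2) < phi r3 A2 + sqnorm A1 ->
  @unique_solution R 2 r3 (m1 + m2) n (blockT A1 A2) ->
  exists (U : 'M[R]_(m1 + m2, 2)) (W : 'M[R]_(n, r3)),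
    [/\ is_solution (blockT A1 A2) U W,
        (forall i : 'I_m1, U (lshift m2 i) ord_max = 0),
        (forall i : 'I_m2, U (rshift m1 i) ord0 = 0) &
        (forall (a b : 'I_2) (k : 'I_r3), a != b ->
           contract (blockT A1 A2) U U W a b k = 0)].
Proof.
move=> _ _ _ _ r3 _ lt1 lt2 [[U [W sol]] uniq].
pose D := block_signmx R m1 m2.
have solD := solutionMl (block_signmx_orthonormal R m1 m2) (contract_block_signmx A1 A2) sol.
have [Q [_ [oQ _ DU _]]] := uniq U W _ _ sol solD.
have symQ : Q^T = Q.
  have [oU _ _] := sol.
  have -> : Q = U^T *m (D *m U) by rewrite DU mulmxA oU mul1mx.
  by rewrite !trmx_mul trmxK /D /block_signmx tr_diag_mx -mulmxA.
have [Rm [e0 [e1 [oR QR signs]]]] := sym_orthonormal2_diag symQ oQ.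
pose U0 := U *m Rm.
have sol0 : is_solution (blockT A1 A2) U0 W := solutionMr sol oR.
have eig : D *m U0 = U0 *m diag_mx (erow e0 e1) by rewrite mulmxA DU -!mulmxA QR.
have zero i c : erow e0 e1 0 c = - block_sign R i -> U0 i c = 0 := block_signmx_eigen_zero eig.
move: zero; case: signs => [[-> ->]|[-> ->]|[-> ->]] zero.
- exists U0, W; split => //; [move=> i | move=> i | apply: blockT_core_offdiag => i];
    by apply: zero; rewrite !mxE /block_sign ?split_lshift ?split_rshift ?opprK.
- have U2 i c : U0 (rshift m1 i) c = 0.
    by apply: zero; rewrite !mxE /block_sign split_rshift opprK; case: ifP.
  by have := block_phi_l sol0 U2; lra.
- have U1 i c : U0 (lshift m2 i) c = 0.
    by apply: zero; rewrite !mxE /block_sign split_lshift; case: ifP.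
  by have := block_phi_r sol0 U1; lra.
Qed.
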